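(* Let $G=(V,E)$ be a connected undirected unweighted graph on $N$ vertices, and let $S_0\subseteq V$ be the initial set of mutants. Then under the mixed $\delta$-updating process with $\delta=1/2$ and neutral fitness $r=1$, the fixation probability satisfies $\mathsf{fp}_{r=1}^{\delta=1/2}(G,S_0)=|S_0|/N$.
   Context: Mixed $\delta$-updating on a connected undirected unweighted graph $G=(V,E)$ with $N$ vertices ($\deg(u)$ is the number of neighbors of $u$): each vertex holds a mutant (fitness $r>0$) or a wild-type (fitness $1$); $S\subseteq V$ denotes the current set of mutants and $f_S(u)\in\{1,r\}$ the fitness at $u$. At each discrete time step, independently, with probability $\delta$ a death-Birth (dB) step occurs: a vertex $v$ is chosen uniformly at random to die, then a neighbor $u$ of $v$ is chosen with probability proportional to $f_S(u)$, and $u$ copies its type onto $v$. With probability $1-\delta$ a Birth-death (Bd) step occurs: a vertex $u$ is chosen with probability proportional to $f_S(u)$ among all of $V$, then a neighbor $v$ of $u$ is chosen uniformly at random, and $u$ copies its type onto $v$. Fixation means all vertices become mutant. $\mathsf{fp}_r^\delta(G,S_0)$ is the probability of fixation when the initial mutant set is $S_0$. *)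

From HB Require Import structures.
From mathcomp Require Import all_boot all_order all_algebra.
From mathcomp Require Import all_classical all_reals all_analysis.
Set Implicit Arguments. Unset Strict Implicit. Unset Printing Implicit Defensive.
Import Order.TTheory GRing.Theory Num.Theory.
Local Open Scope ring_scope.

Section MixedUpdating.
Variables (R : realType) (T : finType) (e : rel T).

Definition undirected_graph := symmetric e /\ irreflexive e.
Definition connected_graph := forall x y : T, connect e x y.

Definition nbrs (u : T) : {set T} := [set w | e u w].
Definition deg (u : T) : nat := #|nbrs u|.

(* fitness of vertex u in state S (S = set of mutants) *)
Definition fit (r : R) (S : {set T}) (u : T) : R := if u \in S then r else 1.

Definition reproduce (S : {set T}) (u v : T) : {set T} :=
  if u \in S then v |: S else S :\ v.

(* death-Birth step transition probability S -> S'.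
   Convention: if the dying vertex has no neighbours, nothing happens. *)
Definition dB_step (r : R) (S S' : {set T}) : R :=
  \sum_(v : T) #|T|%:R^-1 *
    (if deg v == 0%N then (S' == S)%:R
     else \sum_(u in nbrs v)
            fit r S u / (\sum_(w in nbrs v) fit r S w) * (S' == reproduce S u v)%:R).

(* Birth-death step transition probability S -> S'.
   Convention: if the reproducing vertex has no neighbours, nothing happens. *)
Definition Bd_step (r : R) (S S' : {set T}) : R :=
  \sum_(u : T) fit r S u / (\sum_(w : T) fit r S w) *
    (if deg u == 0%N then (S' == S)%:R
     else \sum_(v in nbrs u) (deg u)%:R^-1 * (S' == reproduce S u v)%:R).

Definition mixed_step (delta r : R) (S S' : {set T}) : R :=
  delta * dB_step r S S' + (1 - delta) * Bd_step r S S'.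

Fixpoint mixed_steps (delta r : R) (t : nat) (S S' : {set T}) : R :=
  match t with
  | 0%N => (S' == S)%:R
  | t'.+1 => \sum_(S'' : {set T}) mixed_steps delta r t' S S'' * mixed_step delta r S'' S'
  end.

(* probability that all vertices are mutants at time t, starting from S0;
   the fixation probability fp_r^delta(G,S0) is its limit as t -> oo
   (the state [set: T] is absorbing). *)
Definition fix_by (delta r : R) (S0 : {set T}) (t : nat) : R :=
  mixed_steps delta r t S0 [set: T].

End MixedUpdating.

(* |S| is a martingale and |S|^2 a submartingale of the neutral mixed chain
   with delta = 1/2: a death-Birth step in which u replaces v and a
   Birth-death step in which v replaces u have the same probability
   1 / (N deg v), so the changes of |S| cancel in pairs, while those of |S|^2
   add up to twice the weight of the boundary edges.  On a connected graph
   every state other than the empty and the full set has a boundary edge,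
   which raises E|S|^2 by at least 1/N^2 times the probability of such a
   state; as |S|^2 <= N |S| and E|S| = |S0| keep E|S|^2 bounded, that
   probability tends to 0.  Then the chain is absorbed in the full set with
   probability tending to E|S| / N = |S0| / N. *)

From HB Require Import structures.
From mathcomp Require Import all_boot all_order all_algebra.
From mathcomp Require Import all_classical all_reals all_analysis.
From mathcomp Require Import ring.
Set Implicit Arguments. Unset Strict Implicit. Unset Printing Implicit Defensive.
Import Order.TTheory GRing.Theory Num.Theory numFieldNormedType.Exports.
Local Open Scope ring_scope.

Lemma nonneg_increments_cvg0 (R : realType) (a q : R ^nat) (c B : R) :
  0 < c -> (forall n, 0 <= q n) -> (forall n, a n + c * q n <= a n.+1) ->
  (forall n, a n <= B) -> (q @ \oo --> 0)%classic.
Proof.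
move=> c_gt0 q_ge0 a_incr a_le.
have a_series n : a 0%N + c * series q n <= a n.
  elim: n => [|n IH]; first by rewrite /series /= big_geq // mulr0 addr0.
  by rewrite seriesSr mulrDr addrA (le_trans _ (a_incr n)) ?lerD2r.
apply: cvg_series_cvg_0; apply: nondecreasing_is_cvgn.
  by apply/nondecreasing_seqP => n; rewrite seriesSr lerDl.
exists ((B - a 0%N) / c) => _ [n _ <-].
rewrite ler_pdivlMr // lerBrDl mulrC.
exact: le_trans (a_series n) (a_le n).
Qed.

Section PointMasses.
Variables (R : numDomainType) (I J : finType).

Lemma sum_dirac (i : I) (g : I -> R) : \sum_j (j == i)%:R * g j = g i.
Proof.
rewrite (bigD1 i) //= eqxx mul1r big1 ?addr0 // => j /negbTE ->.
by rewrite mul0r.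
Qed.

Lemma sum_dirac_mix (A : {pred J}) (k : J -> R) (f : J -> I) (g : I -> R) :
  \sum_i (\sum_(u in A) k u * (i == f u)%:R) * g i = \sum_(u in A) k u * g (f u).
Proof.
under eq_bigr do rewrite mulr_suml.
rewrite exchange_big /=; apply: eq_bigr => u _.
under eq_bigr do rewrite -mulrA.
by rewrite -mulr_sumr sum_dirac.
Qed.

Lemma sum_mix (c : J -> R) (F : J -> I -> R) (g : I -> R) :
  \sum_i (\sum_v c v * F v i) * g i = \sum_v c v * \sum_i F v i * g i.
Proof.
under eq_bigr do rewrite mulr_suml.
rewrite exchange_big /=; apply: eq_bigr => v _; rewrite mulr_sumr.
by apply: eq_bigr => i _; rewrite mulrA.
Qed.

End PointMasses.

Section MixedChain.
Variables (R : realType) (T : finType) (e : rel T) (delta r : R).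
Hypotheses (delta_ge0 : 0 <= delta) (delta_le1 : delta <= 1) (r_ge0 : 0 <= r).

Definition next_mean (g : {set T} -> R) (S : {set T}) : R :=
  \sum_S' mixed_step e delta r S S' * g S'.

Lemma fit_ge0 (S : {set T}) u : 0 <= fit r S u.
Proof. by rewrite /fit; case: ifP. Qed.

Lemma dB_step_ge0 (S S' : {set T}) : 0 <= dB_step e r S S'.
Proof.
apply: sumr_ge0 => v _; rewrite mulr_ge0 ?invr_ge0 ?ler0n //.
case: ifP => _; first exact: ler0n.
apply: sumr_ge0 => u _; rewrite mulr_ge0 ?ler0n ?divr_ge0 ?fit_ge0 //.
by apply: sumr_ge0 => w _; exact: fit_ge0.
Qed.

Lemma Bd_step_ge0 (S S' : {set T}) : 0 <= Bd_step e r S S'.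
Proof.
apply: sumr_ge0 => u _; rewrite mulr_ge0 ?divr_ge0 ?fit_ge0 //.
- by apply: sumr_ge0 => w _; exact: fit_ge0.
case: ifP => _; first exact: ler0n.
by apply: sumr_ge0 => v _; rewrite mulr_ge0 ?invr_ge0 ?ler0n.
Qed.

Lemma mixed_step_ge0 (S S' : {set T}) : 0 <= mixed_step e delta r S S'.
Proof.
by rewrite addr_ge0 ?mulr_ge0 ?dB_step_ge0 ?Bd_step_ge0 ?subr_ge0.
Qed.

Lemma mixed_steps_ge0 t (S S' : {set T}) : 0 <= mixed_steps e delta r t S S'.
Proof.
elim: t S' => [|t IH] S' /=; first exact: ler0n.
by apply: sumr_ge0 => S'' _; rewrite mulr_ge0 ?IH ?mixed_step_ge0.
Qed.

Variable S0 : {set T}.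

Definition expect t (g : {set T} -> R) : R :=
  \sum_S mixed_steps e delta r t S0 S * g S.

Lemma expect0 g : expect 0 g = g S0.
Proof. exact: sum_dirac. Qed.

Lemma expectS t g : expect t.+1 g = expect t (next_mean g).
Proof. exact: sum_mix. Qed.

Lemma expect_le t g h : (forall S, g S <= h S) -> expect t g <= expect t h.
Proof.
by move=> gh; apply: ler_sum => S _; rewrite ler_wpM2l ?mixed_steps_ge0.
Qed.

Lemma expect_ge0 t g : (forall S, 0 <= g S) -> 0 <= expect t g.
Proof.
by move=> g_ge0; apply: sumr_ge0 => S _; rewrite mulr_ge0 ?mixed_steps_ge0.
Qed.

Lemma expectD t g h :
  expect t (fun S => g S + h S) = expect t g + expect t h.
Proof. by rewrite -big_split; apply: eq_bigr => S _; rewrite mulrDr. Qed.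

Lemma expectZ t a g : expect t (fun S => a * g S) = a * expect t g.
Proof. by rewrite mulr_sumr; apply: eq_bigr => S _; rewrite mulrCA. Qed.

Lemma eq_expect t g h : g =1 h -> expect t g = expect t h.
Proof. by move=> gh; apply: eq_bigr => S _; rewrite gh. Qed.

Lemma expect_full t :
  expect t (fun S => (S == [set: T])%:R) = fix_by e delta r S0 t.
Proof. by rewrite /expect; under eq_bigr do rewrite mulrC; exact: sum_dirac. Qed.

End MixedChain.

Section Neutral.
Variables (R : realType) (T : finType) (e : rel T).
Hypothesis T_gt0 : (0 < #|T|)%N.
Let N : R := #|T|%:R.

Lemma N_gt0 : 0 < N. Proof. by rewrite ltr0n. Qed.

Lemma fit1 (S : {set T}) u : fit (1 : R) S u = 1.
Proof. by rewrite /fit; case: ifP. Qed.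

Definition incr (g : {set T} -> R) S u v := g (reproduce S u v) - g S.

Lemma nbr_average_centered v (h : T -> R) c :
  (if deg e v == 0%N then c else \sum_(u in nbrs e v) (deg e v)%:R^-1 * h u)
  = c + \sum_(u in nbrs e v) (deg e v)%:R^-1 * (h u - c).
Proof.
case: eqP => [/eqP|/eqP deg_neq0].
  by rewrite cards_eq0 => /eqP ->; rewrite big_set0 addr0.
under [in RHS]eq_bigr do rewrite mulrBr.
rewrite sumrB sumr_const -/(deg e v) -[X in _ - X]mulr_natr mulrAC.
by rewrite mulVf ?pnatr_eq0 // mul1r addrC subrK.
Qed.

Lemma average_over_vertices (a : R) (X : T -> R) :
  \sum_v N^-1 * (a + X v) = a + N^-1 * \sum_v X v.
Proof.
rewrite -mulr_sumr big_split sumr_const -[a *+ _]mulr_natr mulrDr mulrCA.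
by rewrite mulVf ?mulr1 ?gt_eqF ?N_gt0.
Qed.

Lemma dB_mean_neutral g S :
  \sum_S' dB_step e 1 S S' * g S' = g S +
    N^-1 * \sum_v \sum_(u in nbrs e v) (deg e v)%:R^-1 * incr g S u v.
Proof.
rewrite sum_mix -average_over_vertices; apply: eq_bigr => v _; congr (_ * _).
under eq_bigr => S' _.
  rewrite (eq_bigr (fun u => (deg e v)%:R^-1 * (S' == reproduce S u v)%:R)).
    over.
  move=> u _; rewrite fit1 (eq_bigr (fun _ => 1)) => [|w _]; last exact: fit1.
  by rewrite sumr_const div1r.
rewrite -(nbr_average_centered v _ (g S)).
by case: ifP => _; rewrite ?sum_dirac ?sum_dirac_mix.
Qed.

Lemma Bd_mean_neutral g S :
  \sum_S' Bd_step e 1 S S' * g S' = g S +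
    N^-1 * \sum_v \sum_(u in nbrs e v) (deg e v)%:R^-1 * incr g S v u.
Proof.
rewrite sum_mix -average_over_vertices; apply: eq_bigr => u _.
rewrite fit1 (eq_bigr (fun _ => 1)) => [|w _]; last exact: fit1.
rewrite sumr_const div1r; congr (_ * _).
rewrite -(nbr_average_centered u _ (g S)).
by case: ifP => _; rewrite ?sum_dirac ?sum_dirac_mix.
Qed.

Lemma next_mean_neutral delta g S :
  next_mean e delta 1 g S = g S + N^-1 * \sum_v \sum_(u in nbrs e v)
    (deg e v)%:R^-1 * (delta * incr g S u v + (1 - delta) * incr g S v u).
Proof.
rewrite /next_mean /mixed_step.
under eq_bigr do rewrite mulrDl -!mulrA.
rewrite big_split -!mulr_sumr /= dB_mean_neutral Bd_mean_neutral.
under [in RHS]eq_bigr do under eq_bigr do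
  rewrite mulrDr mulrCA [_ * ((1 - delta) * _)]mulrCA.
under [in RHS]eq_bigr do
  rewrite big_split -(mulr_sumr _ _ _ delta) -(mulr_sumr _ _ _ (1 - delta)).
rewrite [in RHS]big_split.
by rewrite -(mulr_sumr _ _ _ delta) -(mulr_sumr _ _ _ (1 - delta)) /=; ring.
Qed.

Lemma mix_half (a b : R) : 2^-1 * a + (1 - 2^-1) * b = (a + b) / 2.
Proof. by field. Qed.

Definition cardR (S : {set T}) : R := #|S|%:R.
Definition card2 (S : {set T}) : R := cardR S ^+ 2.

Lemma cardR_setU1 v S : cardR (v |: S) = cardR S + (v \notin S)%:R.
Proof. by rewrite /cardR cardsU1 natrD addrC. Qed.

Lemma cardR_setD1 v S : cardR (S :\ v) = cardR S - (v \in S)%:R.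
Proof. by rewrite /cardR [in #|S|](cardsD1 v S) natrD addrAC subrr add0r. Qed.

Lemma incr_cardR_antisym S u v : incr cardR S u v + incr cardR S v u = 0.
Proof.
rewrite /incr /reproduce; case Su: (u \in S); case Sv: (v \in S);
  rewrite ?cardR_setU1 ?cardR_setD1 ?Su ?Sv /=; ring.
Qed.

Lemma incr_card2_sym S u v :
  incr card2 S u v + incr card2 S v u = 2 * ((u \in S) != (v \in S))%:R.
Proof.
rewrite /incr /card2 /reproduce; case Su: (u \in S); case Sv: (v \in S);
  rewrite ?cardR_setU1 ?cardR_setD1 ?Su ?Sv /=; ring.
Qed.

Lemma next_mean_cardR S : next_mean e 2^-1 1 cardR S = cardR S.
Proof.
rewrite next_mean_neutral big1 ?mulr0 ?addr0 // => v _; rewrite big1 // => u _.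
by rewrite mix_half incr_cardR_antisym mul0r mulr0.
Qed.

Lemma next_mean_card2 S : next_mean e 2^-1 1 card2 S = card2 S + N^-1 *
  \sum_v \sum_(u in nbrs e v) (deg e v)%:R^-1 * ((u \in S) != (v \in S))%:R.
Proof.
rewrite next_mean_neutral; congr (_ + N^-1 * _).
apply: eq_bigr => v _; apply: eq_bigr => u _.
by rewrite mix_half incr_card2_sym mulrAC mulfV ?mul1r ?pnatr_eq0.
Qed.

Definition transient (S : {set T}) : R :=
  ((S != finset.set0) && (S != [set: T]))%:R.

Lemma card2_le S : card2 S <= N * cardR S.
Proof. by rewrite /card2 expr2 ler_wpM2r ?ler0n // ler_nat max_card. Qed.

Lemma card_sandwich S :
  N * (S == [set: T])%:R <= cardR S <= N * (S == [set: T])%:R + N * transient S.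
Proof.
rewrite /transient; have [->|S_neqT] := eqVneq S [set: T].
  by rewrite /cardR cardsT mulr1 /= andbF mulr0 addr0 lexx.
rewrite mulr0 add0r andbT /cardR ler0n /=.
have [->|_] := eqVneq S finset.set0; first by rewrite cards0 mulr0.
by rewrite mulr1 ler_nat max_card.
Qed.

Lemma boundary_edge (S : {set T}) x y :
  connect e x y -> x \in S -> y \notin S ->
  exists v u, e v u && ((u \in S) != (v \in S)).
Proof.
move=> cxy xS yS.
have [/existsP[v /existsP[u vu]]|/existsPn no_edge] :=
  boolP [exists v, exists u, e v u && ((u \in S) != (v \in S))].
  by exists v, u.
have S_closed : fingraph.closed e S.
  move=> v u evu; apply/eqP; move/existsPn/(_ u): (no_edge v).
  by rewrite evu negbK eq_sym.
by have := closed_connect S_closed cxy; rewrite xS (negbTE yS).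
Qed.

Hypothesis e_connected : connected_graph e.

Lemma boundary_weight_ge S : N^-1 * transient S <=
  \sum_v \sum_(u in nbrs e v) (deg e v)%:R^-1 * ((u \in S) != (v \in S))%:R.
Proof.
have term_ge0 v u : 0 <= (deg e v)%:R^-1 * ((u \in S) != (v \in S))%:R :> R.
  by rewrite mulr_ge0 ?invr_ge0 ?ler0n.
have sum_ge0 v : 0 <= \sum_(u in nbrs e v) (deg e v)%:R^-1 *
    ((u \in S) != (v \in S))%:R :> R by apply: sumr_ge0 => u _.
rewrite /transient; case: (boolP (_ && _)) => [/andP[/set0Pn[x xS] S_neqT]|_];
  last by rewrite mulr0; apply: sumr_ge0 => v _.
rewrite mulr1.
have [y yS] : exists y, y \notin S.
  apply/existsP; rewrite -negb_forall; apply: contra S_neqT => /forallP S_full.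
  by apply/eqP/setP => z; rewrite inE S_full.
have [v [u /andP[evu uv_bd]]] := boundary_edge (e_connected x y) xS yS.
have uv_nbr : u \in nbrs e v by rewrite inE.
have deg_gt0 : (0 < deg e v)%N by apply/card_gt0P; exists u.
rewrite (bigD1 v) //= (bigD1 u) //= uv_bd mulr1 -addrA -[X in X <= _]addr0.
apply: lerD.
  by rewrite lef_pV2 ?posrE ?ltr0n // ler_nat max_card.
by apply: addr_ge0; apply: sumr_ge0 => w _; rewrite ?term_ge0 ?sum_ge0.
Qed.

Lemma next_mean_card2_ge S :
  card2 S + (N * N)^-1 * transient S <= next_mean e 2^-1 1 card2 S.
Proof.
rewrite next_mean_card2 lerD2l invfM -mulrA ler_wpM2l ?invr_ge0 ?ler0n //.
exact: boundary_weight_ge.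
Qed.

Variable S0 : {set T}.
Let E := expect e (2^-1 : R) 1 S0.

Let half_ge0 : 0 <= 2^-1 :> R. Proof. by rewrite invr_ge0 ler0n. Qed.
Let half_le1 : 2^-1 <= 1 :> R. Proof. by rewrite invf_le1 ?ler1n. Qed.
Let E_le := expect_le e half_ge0 half_le1 ler01 S0.

Lemma expect_cardR t : E t cardR = #|S0|%:R.
Proof.
elim: t => [|t IH]; first exact: expect0.
by rewrite /E expectS -IH; apply: eq_expect; exact: next_mean_cardR.
Qed.

Lemma expect_card2_le t : E t card2 <= N * #|S0|%:R.
Proof. by rewrite -(expect_cardR t) -expectZ; apply: E_le; exact: card2_le. Qed.

Lemma expect_card2_incr t :
  E t card2 + (N * N)^-1 * E t transient <= E t.+1 card2.
Proof.
rewrite /E expectS -expectZ -expectD; apply: E_le; exact: next_mean_card2_ge.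
Qed.

Lemma expect_transient_cvg0 : (E ^~ transient @ \oo --> 0)%classic.
Proof.
apply: (@nonneg_increments_cvg0 _ (E ^~ card2) _ (N * N)^-1 (N * #|S0|%:R)).
- by rewrite invr_gt0 mulr_gt0 ?N_gt0.
- by move=> t; apply: (expect_ge0 _ half_ge0 half_le1 ler01) => S; exact: ler0n.
- exact: expect_card2_incr.
- exact: expect_card2_le.
Qed.

Lemma fix_by_bounds t : #|S0|%:R / N - E t transient <=
  fix_by e (2^-1 : R) 1 S0 t <= #|S0|%:R / N.
Proof.
rewrite -expect_full -/E.
have lo : N * E t (fun S => (S == [set: T])%:R) <= #|S0|%:R.
  rewrite -expectZ -(expect_cardR t); apply: E_le => S.
  by case/andP: (card_sandwich S).
have hi : #|S0|%:R <= N * E t (fun S => (S == [set: T])%:R) + N * E t transient.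
  rewrite -!expectZ -expectD -(expect_cardR t); apply: E_le => S.
  by case/andP: (card_sandwich S).
apply/andP; split.
  by rewrite lerBlDr ler_pdivrMr ?N_gt0 // mulrDl ![_ * N]mulrC.
by rewrite ler_pdivlMr ?N_gt0 // mulrC.
Qed.

End Neutral.

Local Open Scope classical_set_scope.

Theorem mainTheorem1 (R : realType) (T : finType) (e : rel T)
  (Hg : undirected_graph e) (Hc : connected_graph e) (HN : (0 < #|T|)%N)
  (S0 : {set T}) :
  fix_by e (2^-1 : R) 1 S0 @ \oo --> (#|S0|%:R / #|T|%:R : R).
Proof.
have lower_cvg : (fun t => #|S0|%:R / #|T|%:R -
    expect e (2^-1 : R) 1 S0 t (@transient R T))
    @ \oo --> (#|S0|%:R / #|T|%:R : R).
  rewrite -[X in _ --> X]subr0; apply: cvgB; first exact: cvg_cst.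
  exact: expect_transient_cvg0.
apply: (squeeze_cvgr _ lower_cvg (cvg_cst _)).
by apply: nearW => t; exact: fix_by_bounds.
Qed.
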